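(* Let $\mathbf A$ be a pseudo-Kleene lattice. Then $\mathbf A$ is super-paraorthomodular if and only if, for all $x,y\in A$ with $x\leq y$, the elements $\pi_{0_{x,y}}(x)$ and $\pi_{0_{x,y}}(y)$ generate a Boolean subalgebra of $\mathbf{Local}(x,y)$.
   Context: A pseudo-Kleene lattice is an algebra $(A,\land,\lor,{}',0,1)$ that is a bounded lattice with an antitone involution ${}'$ ($x\leq y\Rightarrow y'\leq x'$, $x''=x$) satisfying $x\land x'\leq y\lor y'$. It is super-paraorthomodular if for all $x,y$: (SP1) $x\leq y$ and $x'\land y=(x\land x')\lor(y\land y')$ imply $y\land(x\lor x')=x\lor(y\land y')$; (SP2) $x\leq y$ implies $(x\land x')\lor(y\land y')=(x'\land y)\land(x'\land y)'$. For $x,y\in A$: $0_{x,y}=(x\land x')\lor(y\land y')$, $1_{x,y}=(x\lor x')\land(y\lor y')$, and $\pi_z(w)=(w\land(z\lor z'))\lor(z\land z')$. $\mathbf{Local}(x,y)$ is the pseudo-Kleene lattice on the interval $[0_{x,y},1_{x,y}]$ with $\land,\lor,{}'$ inherited from $\mathbf A$ and bounds $0_{x,y},1_{x,y}$. A Boolean subalgebra of $\mathbf{Local}(x,y)$ is a subalgebra (closed under $\land,\lor,{}'$, containing $0_{x,y},1_{x,y}$) that is a distributive lattice in which $u\land u'=0_{x,y}$ for all its elements $u$. *)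

From HB Require Import structures.
From mathcomp Require Import all_boot all_order.
Set Implicit Arguments. Unset Strict Implicit. Unset Printing Implicit Defensive.
Import Order.LTheory.
Local Open Scope order_scope.

Section PK.
Context {disp : Order.disp_t} {T : tbLatticeType disp} (c : T -> T).

Definition pseudo_kleene : Prop :=
  (forall x y : T, x <= y -> c y <= c x) /\
  (forall x : T, c (c x) = x) /\
  (forall x y : T, x `&` c x <= y `|` c y).

Definition zero_xy (x y : T) : T := (x `&` c x) `|` (y `&` c y).
Definition one_xy (x y : T) : T := (x `|` c x) `&` (y `|` c y).

Definition pi_ (z w : T) : T := (w `&` (z `|` c z)) `|` (z `&` c z).

Definition super_paraorthomodular : Prop :=
  (forall x y : T, x <= y -> c x `&` y = zero_xy x y ->
       y `&` (x `|` c x) = x `|` (y `&` c y)) /\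
  (forall x y : T, x <= y ->
       zero_xy x y = (c x `&` y) `&` c (c x `&` y)).

Inductive gen_local (x y a b : T) : T -> Prop :=
  | gen_a : gen_local x y a b a
  | gen_b : gen_local x y a b b
  | gen_0 : gen_local x y a b (zero_xy x y)
  | gen_1 : gen_local x y a b (one_xy x y)
  | gen_meet u v : gen_local x y a b u -> gen_local x y a b v ->
                   gen_local x y a b (u `&` v)
  | gen_join u v : gen_local x y a b u -> gen_local x y a b v ->
                   gen_local x y a b (u `|` v)
  | gen_compl u : gen_local x y a b u -> gen_local x y a b (c u).

Definition boolean_subalgebra_of_local (x y : T) (S : T -> Prop) : Prop :=
  (forall u, S u -> zero_xy x y <= u /\ u <= one_xy x y) /\
  S (zero_xy x y) /\ S (one_xy x y) /\
  (forall u v, S u -> S v -> S (u `&` v) /\ S (u `|` v)) /\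
  (forall u, S u -> S (c u)) /\
  (forall u v w, S u -> S v -> S w ->
       u `&` (v `|` w) = (u `&` v) `|` (u `&` w)) /\
  (forall u, S u -> u `&` c u = zero_xy x y).

End PK.

From HB Require Import structures.
From mathcomp Require Import all_boot all_order.
Import Order.LTheory.
Local Open Scope order_scope.

(* For x <= y write a = pi_{0_{x,y}}(x) = x \/ (y /\ y'), b = pi_{0_{x,y}}(y) =
   y /\ (x \/ x') and d = x' /\ y, so that b /\ a' = d.  Under
   super-paraorthomodularity a, d and b' are pairwise disjoint atoms whose
   joins are the eight elements 0, a, d, b', b, d', a', 1; the indexing of
   these elements by bool^3 preserves meets and complements, so the subalgebra
   they form inherits distributivity and complementation from bool^3.
   Conversely, in a Boolean subalgebra b = b /\ (a \/ a') = a \/ d, which is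
   SP1, and d belongs to it, so d /\ d' = 0_{x,y}, which is SP2. *)

Ltac lattice_le n :=
  lazymatch n with 0 => fail | S ?m =>
  match goal with
  | |- is_true (_ <= _ `&` _) => rewrite lexI; apply/andP; split; lattice_le n
  | |- is_true (_ `|` _ <= _) => rewrite leUx; apply/andP; split; lattice_le n
  | |- _ => first [ exact: lexx
      | apply: leIxl; lattice_le m | apply: leIxr; lattice_le m
      | apply: lexUl; lattice_le m | apply: lexUr; lattice_le m
      | match goal with H : is_true (?p <= _) |- is_true (?p <= _) =>
          apply: (le_trans H); lattice_le m end
      | match goal with H : is_true (_ <= ?q) |- is_true (_ <= ?q) =>
          apply: (le_trans _ H); lattice_le m end ]
  end end.

Ltac lattice_eq := apply/le_anti/andP; split; lattice_le 6.

Definition meet3 (i j : bool * bool * bool) : bool * bool * bool :=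
  (i.1.1 && j.1.1, i.1.2 && j.1.2, i.2 && j.2).
Definition compl3 (i : bool * bool * bool) : bool * bool * bool :=
  (~~ i.1.1, ~~ i.1.2, ~~ i.2).
Definition join3 (i j : bool * bool * bool) : bool * bool * bool :=
  compl3 (meet3 (compl3 i) (compl3 j)).

Section AntitoneInvolution.
Context {disp : Order.disp_t} {T : tbLatticeType disp} (c : T -> T).
Hypothesis c_anti : forall {x y : T}, x <= y -> c y <= c x.
Hypothesis cK : involutive c.
Hypothesis spo : super_paraorthomodular c.

Lemma compl_meet (p q : T) : c (p `&` q) = c p `|` c q.
Proof.
apply/le_anti/andP; split; last by rewrite leUx !c_anti ?leIl ?leIr.
rewrite -[X in _ <= X]cK c_anti // lexI.
by apply/andP; split; [rewrite -[X in _ <= X](cK p) | rewrite -[X in _ <= X](cK q)];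
  rewrite c_anti ?leUl ?leUr.
Qed.

Lemma compl_join (p q : T) : c (p `|` q) = c p `&` c q.
Proof. by rewrite -{1}(cK p) -{1}(cK q) -compl_meet cK. Qed.

Ltac push_compl :=
  rewrite /zero_xy /one_xy /pi_ ?(compl_meet, compl_join, cK).

Lemma compl_zero_xy (x y : T) : c (zero_xy c x y) = one_xy c x y.
Proof. by push_compl; rewrite [c x `|` x]joinC [c y `|` y]joinC. Qed.

Lemma zero_xy_le_compl (x y : T) :
  x <= y -> zero_xy c x y <= c (zero_xy c x y).
Proof. by move=> xy; have cyx := c_anti xy; push_compl; lattice_le 6. Qed.

(* SP1 for x <= y `&` (x `|` c y), a pair whose 0 is 0_{x,y} by SP2. *)
Lemma spo_meet_joinc {x y : T} :
  x <= y -> y `&` (x `|` c y) = x `|` (y `&` c y).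
Proof.
move=> xy; have cyx := c_anti xy; case: spo => sp1 sp2.
set q := y `&` (x `|` c y).
have xq : x <= q by rewrite /q; lattice_le 6.
have cxq : c x `&` q = zero_xy c x y.
  by rewrite (sp2 x y xy) compl_meet cK /q; lattice_eq.
have zero_xq : zero_xy c x q = zero_xy c x y.
  by rewrite (sp2 x q xq) cxq; apply/meet_idPl/zero_xy_le_compl.
have := sp1 x q xq; rewrite zero_xq => /(_ cxq).
rewrite (meet_idPl (_ : q <= x `|` c x)); last by rewrite /q; lattice_le 6.
move=> q_eq; apply/le_anti/andP; split; last by rewrite /q; lattice_le 6.
have qcq : q `&` c q <= zero_xy c x y by rewrite -zero_xq leUr.
rewrite [X in X <= _]q_eq leUx lexUl //=.
by apply: (le_trans qcq); rewrite /zero_xy; lattice_le 6.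
Qed.

Lemma boolean_local_join_compl {x y : T} {S : T -> Prop} {u : T} :
  boolean_subalgebra_of_local c x y S -> S u -> u `|` c u = one_xy c x y.
Proof.
case=> _ [_ [_ [_ [S_compl [_ S_meet_compl]]]]] Su.
have := S_meet_compl _ (S_compl _ Su); rewrite cK => cuu.
by rewrite -compl_zero_xy -cuu compl_meet cK joinC.
Qed.

Lemma boolean_local_decomp {x y : T} {S : T -> Prop} {u v : T} :
  boolean_subalgebra_of_local c x y S -> S u -> S v -> u <= v ->
  v = u `|` (v `&` c u).
Proof.
move=> SB Su Sv uv; have [S_bound [_ [_ [_ [S_compl [S_distr _]]]]]] := SB.
have v1 : v <= one_xy c x y by case: (S_bound _ Sv).
rewrite -{1}(meet_idPl v1) -(boolean_local_join_compl SB Su).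
by rewrite (S_distr _ _ _ Sv Su (S_compl _ Su)) (meet_idPr uv).
Qed.

Lemma meet_squeeze_compl (z u v : T) :
  u `&` c u = z -> z <= u `&` v -> v <= c u -> u `&` v = z.
Proof. by move=> <- zuv vcu; apply/le_anti; rewrite zuv leI2. Qed.

Section Interval.
Variables x y : T.
Hypothesis xy : x <= y.
Let cyx : c y <= c x := c_anti xy.

Definition pi0x : T := x `|` (y `&` c y).
Definition pi0y : T := y `&` (x `|` c x).
Definition ydiffx : T := c x `&` y.

Local Notation gen :=
  (gen_local c x y (pi_ c (zero_xy c x y) x) (pi_ c (zero_xy c x y) y)).

Lemma pi_zero_x : pi_ c (zero_xy c x y) x = pi0x.
Proof. by rewrite /pi0x; push_compl; lattice_eq. Qed.

Lemma pi_zero_y : pi_ c (zero_xy c x y) y = pi0y.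
Proof. by rewrite /pi0y; push_compl; lattice_eq. Qed.

Lemma gen_pi0x : gen pi0x.
Proof. by rewrite -pi_zero_x; apply: gen_a. Qed.

Lemma gen_pi0y : gen pi0y.
Proof. by rewrite -pi_zero_y; apply: gen_b. Qed.

Lemma zero_le_pi0x : zero_xy c x y <= pi0x.
Proof. by rewrite /pi0x /zero_xy; lattice_le 6. Qed.

Lemma pi0x_le_pi0y : pi0x <= pi0y.
Proof. by rewrite /pi0x /pi0y; lattice_le 6. Qed.

Lemma pi0y_meet_compl_pi0x : pi0y `&` c pi0x = ydiffx.
Proof. by rewrite /pi0x /pi0y /ydiffx; push_compl; lattice_eq. Qed.

Lemma boolean_local_sp1 : boolean_subalgebra_of_local c x y gen ->
  c x `&` y = zero_xy c x y -> y `&` (x `|` c x) = x `|` (y `&` c y).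
Proof.
move=> SB diff0; rewrite -[LHS]/pi0y -[RHS]/pi0x.
rewrite (boolean_local_decomp SB gen_pi0x gen_pi0y pi0x_le_pi0y).
by rewrite pi0y_meet_compl_pi0x /ydiffx diff0; apply/join_idPl/zero_le_pi0x.
Qed.

Lemma boolean_local_sp2 : boolean_subalgebra_of_local c x y gen ->
  zero_xy c x y = (c x `&` y) `&` c (c x `&` y).
Proof.
case=> _ [_ [_ [S_meet [S_compl [_ S_meet_compl]]]]].
have [Sdiff _] := S_meet _ _ gen_pi0y (S_compl _ gen_pi0x).
by rewrite pi0y_meet_compl_pi0x in Sdiff; rewrite S_meet_compl.
Qed.

Lemma zero_xy_pi0 : zero_xy c pi0x pi0y = zero_xy c x y.
Proof.
rewrite (spo.2 _ _ pi0x_le_pi0y) [c pi0x `&` _]meetC pi0y_meet_compl_pi0x.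
by rewrite /ydiffx -(spo.2 x y xy).
Qed.

Lemma pi0x_meet_compl : pi0x `&` c pi0x = zero_xy c x y.
Proof.
apply/le_anti/andP; split; first by rewrite -zero_xy_pi0 leUl.
by rewrite /pi0x; push_compl; lattice_le 6.
Qed.

Lemma pi0y_meet_compl : pi0y `&` c pi0y = zero_xy c x y.
Proof.
apply/le_anti/andP; split; first by rewrite -zero_xy_pi0 leUr.
by rewrite /pi0y; push_compl; lattice_le 6.
Qed.

Lemma ydiffx_meet_compl : ydiffx `&` c ydiffx = zero_xy c x y.
Proof. by rewrite (spo.2 x y xy). Qed.

(* Indexed by which of the atoms pi0x, ydiffx, c pi0y lie below it. *)
Definition local_elem (i : bool * bool * bool) : T :=
  match i with
  | (false, false, false) => zero_xy c x y
  | (true, false, false) => pi0x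
  | (false, true, false) => ydiffx
  | (false, false, true) => c pi0y
  | (true, true, false) => pi0y
  | (true, false, true) => c ydiffx
  | (false, true, true) => c pi0x
  | (true, true, true) => c (zero_xy c x y)
  end.

Lemma local_elem_compl i : local_elem (compl3 i) = c (local_elem i).
Proof. by case: i => [[[] []] []]; rewrite /= ?cK. Qed.

Lemma local_elem_mono i j : meet3 i j == i -> local_elem i <= local_elem j.
Proof.
case: i => [[[] []] []]; case: j => [[[] []] []] //= _;
  rewrite /pi0x /pi0y /ydiffx; push_compl; lattice_le 6.
Qed.

Lemma pi0x_meet_ydiffx : pi0x `&` ydiffx = zero_xy c x y.
Proof.
apply: meet_squeeze_compl pi0x_meet_compl _ _;
  by rewrite /pi0x /ydiffx; push_compl; lattice_le 6.
Qed.

Lemma pi0x_meet_compl_pi0y : pi0x `&` c pi0y = zero_xy c x y.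
Proof.
apply: meet_squeeze_compl pi0x_meet_compl _ _;
  by rewrite /pi0x /pi0y; push_compl; lattice_le 6.
Qed.

Lemma ydiffx_meet_compl_pi0y : ydiffx `&` c pi0y = zero_xy c x y.
Proof.
apply: meet_squeeze_compl ydiffx_meet_compl _ _;
  by rewrite /ydiffx /pi0y; push_compl; lattice_le 6.
Qed.

Lemma pi0y_meet_compl_ydiffx : pi0y `&` c ydiffx = pi0x.
Proof.
apply/le_anti/andP; split;
  last by rewrite /pi0y /ydiffx /pi0x; push_compl; lattice_le 6.
by rewrite /pi0x -(spo_meet_joinc xy) /pi0y /ydiffx; push_compl; lattice_le 6.
Qed.

Lemma compl_ydiffx_meet_compl_pi0x : c ydiffx `&` c pi0x = c pi0y.
Proof.
apply/le_anti/andP; split;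
  last by rewrite /pi0y /ydiffx /pi0x; push_compl; lattice_le 6.
apply: (@le_trans _ _ (c x `&` (c y `|` x))).
  by rewrite /ydiffx /pi0x; push_compl; lattice_le 6.
by rewrite -{2}(cK x) (spo_meet_joinc cyx) /pi0y; push_compl; lattice_le 6.
Qed.

Lemma local_elem_meet i j :
  local_elem (meet3 i j) = local_elem i `&` local_elem j.
Proof.
have [ij|ij] := eqVneq (meet3 i j) i.
  by rewrite ij; apply/esym/meet_idPl/local_elem_mono/eqP.
have [ji|ji] := eqVneq (meet3 i j) j.
  rewrite ji; apply/esym/meet_idPr/local_elem_mono/eqP.
  by case: i j ji {ij} => [[[] []] []] [[[] []] []].
have meet_table := (pi0x_meet_compl, ydiffx_meet_compl, pi0y_meet_compl,
  pi0x_meet_ydiffx, pi0x_meet_compl_pi0y, ydiffx_meet_compl_pi0y,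
  pi0y_meet_compl_pi0x, pi0y_meet_compl_ydiffx, compl_ydiffx_meet_compl_pi0x).
case: i ij ji => [[[] []] []]; case: j => [[[] []] []] //= _ _;
  by [rewrite meet_table | rewrite meetC meet_table].
Qed.

Lemma local_elem_join i j :
  local_elem (join3 i j) = local_elem i `|` local_elem j.
Proof.
by rewrite local_elem_compl local_elem_meet !local_elem_compl compl_meet !cK.
Qed.

Lemma gen_local_elem u : gen u -> exists i, u = local_elem i.
Proof.
elim=> [| | | | _ _ _ [i ->] _ [j ->] | _ _ _ [i ->] _ [j ->] | _ _ [i ->]].
- by exists (true, false, false); rewrite pi_zero_x.
- by exists (true, true, false); rewrite pi_zero_y.
- by exists (false, false, false).
- by exists (true, true, true); rewrite /= compl_zero_xy.
- by exists (meet3 i j); rewrite local_elem_meet.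
- by exists (join3 i j); rewrite local_elem_join.
- by exists (compl3 i); rewrite local_elem_compl.
Qed.

Lemma gen_local_boolean : boolean_subalgebra_of_local c x y gen.
Proof.
split.
  move=> _ /gen_local_elem [i ->].
  rewrite -compl_zero_xy -[zero_xy c x y]/(local_elem (false, false, false)).
  rewrite -[c _]/(local_elem (true, true, true)).
  by split; apply/meet_idPl; rewrite -local_elem_meet; case: i => [[[] []] []].
split; first exact: gen_0.
split; first exact: gen_1.
split; first by move=> u v Su Sv; split; [apply: gen_meet | apply: gen_join].
split; first by move=> u; apply: gen_compl.
split.
  move=> _ _ _ /gen_local_elem [i ->] /gen_local_elem [j ->] /gen_local_elem [k ->].
  rewrite -local_elem_join -!local_elem_meet -local_elem_join; congr local_elem.
  by case: i j k => [[[] []] []] [[[] []] []] [[[] []] []].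
move=> _ /gen_local_elem [i ->].
by rewrite -local_elem_compl -local_elem_meet; case: i => [[[] []] []].
Qed.

End Interval.
End AntitoneInvolution.

Theorem lemma4p8 (disp : Order.disp_t) (T : tbLatticeType disp) (c : T -> T) :
  pseudo_kleene c ->
  (super_paraorthomodular c <->
   (forall x y : T, x <= y ->
      boolean_subalgebra_of_local c x y
        (gen_local c x y (pi_ c (zero_xy c x y) x) (pi_ c (zero_xy c x y) y)))).
Proof.
case=> c_anti [cK _]; split=> [spo x y xy | gen_boolean].
  exact: gen_local_boolean.
split=> x y xy.
  exact: boolean_local_sp1 (gen_boolean x y xy).
exact: boolean_local_sp2 (gen_boolean x y xy).
Qed.
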